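(* The categories $(\mathcal I_D)_{D}$, where $D$ ranges over all subsemigroups of $(\mathbb N_0,+)$, are pairwise distinct: if $D_1,D_2$ are subsemigroups of $(\mathbb N_0,+)$ with $\mathcal I_{D_1}=\mathcal I_{D_2}$, then $D_1=D_2$.
   Context: A (two-colored) partition $p$ consists of two finite totally ordered sets $U$ (upper row) and $L$ (lower row), a decomposition of the disjoint union $U\sqcup L$ (the points) into non-empty pairwise disjoint blocks, and a coloring of every point by $\circ$ or $\bullet$. A pair partition is one all of whose blocks have two points. Cyclic order and color sum: on the points of $p$ consider the cyclic order obtained by traversing the lower row from left to right, then the upper row from right to left, then returning to the leftmost lower point. For points $\alpha,\beta$, $]\alpha,\beta[$ denotes the points strictly after $\alpha$ and strictly before $\beta$ in this cyclic order, and $]\alpha,\beta]:=]\alpha,\beta[\cup\{\beta\}$ if $\alpha\neq\beta$, $]\alpha,\alpha]:=\emptyset$. The normalized color of a lower point is its color, that of an upper point the opposite color. For a set $S$ of points, $\sigma_p(S)$ is the number of normalized-$\circ$ points in $S$ minus the number of normalized-$\bullet$ points in $S$. Two distinct blocks $B,B'$ cross if there are $\alpha,\beta\in B$, $\gamma,\delta\in B'$ occurring in the cyclic order as $\alpha,\gamma,\beta,\delta$. $\mathcal P^{\circ\bullet}_{2,\mathrm{nb}}$: pair partitions each block of which contains one point of each normalized color. $\mathcal S_0$: those $p\in\mathcal P^{\circ\bullet}_{2,\mathrm{nb}}$ with $\sigma_p(]\alpha,\beta[)=0$ for every block $\{\alpha,\beta\}$. For $p\in\mathcal S_0$ and points $\alpha,\beta$: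 $\delta_p(\alpha,\beta)=\sigma_p(]\alpha,\beta[)$ if they have different normalized colors, $\sigma_p(]\alpha,\beta])$ otherwise; for blocks $B,B'$, $d_p(B,B'):=|\delta_p(\alpha,\alpha')|$ for any $\alpha\in B,\alpha'\in B'$ (independent of the choice). A subsemigroup of $(\mathbb N_0,+)$ is a (possibly empty) subset closed under addition. $\mathcal I_D$ is the set of all $p\in\mathcal S_0$ such that $d_p(B,B')\notin D$ for all pairs of crossing blocks $B,B'$ of $p$. *)

From mathcomp Require Import all_boot all_order all_algebra.
Set Implicit Arguments. Unset Strict Implicit. Unset Printing Implicit Defensive.
Import Order.TTheory GRing.Theory Num.Theory.

(* A two-colored partition: upper row 'I_nup (points inl i), lower row
   'I_nlo (points inr j), a set of blocks forming a partition (mathcomp's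
   [partition]: covers, pairwise disjoint, no empty block) of all points,
   and a coloring; [col x = true] means x is colored white (\circ). *)
Record tpart := TPart {
  nup : nat;
  nlo : nat;
  blk : {set {set ('I_nup + 'I_nlo)}};
  col : ('I_nup + 'I_nlo) -> bool;
  blk_part : partition blk [set: 'I_nup + 'I_nlo]
}.

Definition pt (p : tpart) : finType := ('I_(nup p) + 'I_(nlo p))%type.

(* position in the cyclic order: lower row left to right (0..nlo-1),
   then upper row right to left (nlo .. nlo+nup-1) *)
Definition pos (p : tpart) (x : pt p) : nat :=
  match x with
  | inl i => nlo p + (nup p - 1 - i)
  | inr j => j
  end.

Definition normcol (p : tpart) (x : pt p) : bool :=
  match x with
  | inl _ => ~~ @col p x
  | inr _ => @col p x
  end.

Definition sigma (p : tpart) (S : {set pt p}) : int :=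
  (#|[set x in S | normcol x]|%:Z - #|[set x in S | ~~ normcol x]|%:Z)%R.

Definition cyc3 (a b c : nat) : bool :=
  [|| (a < b < c), (b < c < a) | (c < a < b)].

Definition oint (p : tpart) (a b : pt p) : {set pt p} :=
  [set g | cyc3 (pos a) (pos g) (pos b)].

Definition ocint (p : tpart) (a b : pt p) : {set pt p} :=
  if a == b then set0 else b |: oint a b.

Definition pair_nb (p : tpart) : bool :=
  [forall B in blk p, (#|B| == 2) &&
     [exists x in B, exists y in B, normcol x != normcol y]].

Definition S0 (p : tpart) : Prop :=
  pair_nb p /\
  forall B, B \in blk p -> forall a b, a \in B -> b \in B -> a != b ->
    sigma (oint a b) = 0%R.

Definition delta (p : tpart) (a b : pt p) : int :=
  if normcol a != normcol b then sigma (oint a b) else sigma (ocint a b).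

Definition dp (p : tpart) (B B' : {set pt p}) : nat :=
  match [pick x in B], [pick y in B'] with
  | Some x, Some y => absz (delta x y)
  | _, _ => 0
  end.

Definition crossing (p : tpart) (B B' : {set pt p}) : Prop :=
  B != B' /\
  exists a b c d, [/\ a \in B, b \in B, c \in B', d \in B' &
    cyc3 (pos a) (pos c) (pos b) && cyc3 (pos b) (pos d) (pos a)].

Definition subsemigroup (D : nat -> Prop) : Prop :=
  forall m n, D m -> D n -> D (m + n).

Definition in_ID (D : nat -> Prop) (p : tpart) : Prop :=
  S0 p /\
  forall B B', B \in blk p -> B' \in blk p -> crossing B B' -> ~ D (dp B B').

(** If [n] is not in the subsemigroup [D], some partition in [I_D] has two
   crossing blocks at distance [n]; for [D = D2] this partition also lies in
   [I_D1], so [n] is not in [D1] either.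

   All these partitions have an empty upper row.  Along the lower row the
   normalized colour sum of the points passed so far is a height moving by
   +-1; a point sits at the lower of the two heights around it.  Pairing
   points of equal level and opposite colours gives an element of [S_0] in
   which [d_p] is the difference of levels.  For [n = 0], six alternately
   coloured points each joined to the point three places on give three
   pairwise crossing blocks of level 0.  For [n > 0] the height climbs
   0, n+1, 0, n+1, 0, so each level [L <= n] has four points; they are paired
   across the two mountains if [L = n] or [n - L \in D] and inside each
   mountain otherwise.  Blocks cross only when an across level [L] lies above
   an inside level [L'], and then [L - L' \in D] would give [n - L' \in D];
   levels [0] and [n] do cross. *)

From mathcomp Require Import all_boot all_order all_algebra.
From mathcomp Require Import zify.
From Stdlib Require Import ClassicalEpsilon.
Set Implicit Arguments. Unset Strict Implicit. Unset Printing Implicit Defensive.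
Import Order.TTheory GRing.Theory Num.Theory.

Definition crosses_at (p : tpart) (n : nat) : Prop :=
  exists B B', [/\ B \in blk p, B' \in blk p, crossing B B' & dp B B' = n].

Lemma in_ID_crosses_at D p n : in_ID D p -> crosses_at p n -> ~ D n.
Proof. by move=> [_ noD] [B [B' [HB HB' BB' <-]]]; apply: noD. Qed.

Lemma cyc3_neq u v w : cyc3 u v w -> [/\ u != v, v != w & u != w].
Proof. rewrite /cyc3 => H; split; apply/eqP => E; subst; lia. Qed.

Lemma sigma_sum (p : tpart) (S : {set pt p}) :
  sigma S = (\sum_(x in S) if normcol x then 1 else -1)%R.
Proof.
rewrite /sigma (bigID (@normcol p)) /= -!natz -!sumr_const -sumrN.
by congr (_ + _)%R; apply: eq_big => x; rewrite ?inE // => /andP[_]; [move->|move/negbTE->].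
Qed.

Lemma sum_nat_pred0 (V : nmodType) m n (P : pred nat) (F : nat -> V) :
  (forall j, m <= j < n -> P j = false) -> (\sum_(m <= j < n | P j) F j = 0)%R.
Proof. by move=> P0; rewrite big_nat_cond big1 // => j /andP[/P0 ->]. Qed.

Lemma sum_nat_predT (V : nmodType) m n (P : pred nat) (F : nat -> V) :
  (forall j, m <= j < n -> P j) ->
  (\sum_(m <= j < n | P j) F j = \sum_(m <= j < n) F j)%R.
Proof.
move=> PT; rewrite big_nat_cond [RHS]big_nat_cond.
by apply: eq_bigl => j; case/boolP: (m <= j < n) => // /PT ->.
Qed.

Section LowerRowPairing.

(* [height x] is the normalized colour sum of the points left of [x], up to
   an additive constant. *)
Variables (N : nat) (white : nat -> bool) (lev height mate : nat -> nat).
Hypothesis height_wrap : height N = height 0.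
Hypothesis height_lo : forall x, x < N -> height x = lev x + ~~ white x.
Hypothesis height_hi : forall x, x < N -> height x.+1 = lev x + white x.
Hypothesis mate_lt : forall x, x < N -> mate x < N.
Hypothesis mateK : forall x, x < N -> mate (mate x) = x.
Hypothesis mate_white : forall x, x < N -> white (mate x) = ~~ white x.
Hypothesis mate_lev : forall x, x < N -> lev (mate x) = lev x.

Definition point := ('I_0 + 'I_N)%type.

Definition partner (x : point) : point :=
  if x is inr j then inr (Ordinal (mate_lt (ltn_ord j))) else x.

Lemma partnerK : involutive partner.
Proof. by case=> [//|j] /=; congr inr; apply: val_inj; apply: mateK. Qed.

Lemma mate_neq x : x < N -> mate x != x.
Proof. by move=> lt_xN; apply/eqP => E; move: (mate_white lt_xN); rewrite E; case: (white x). Qed.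

Lemma partner_neq (x : 'I_N) : partner (inr x) != inr x.
Proof. by apply: contraNneq (mate_neq (ltn_ord x)) => -[/(congr1 val) /= ->]. Qed.

Definition same_pair (x y : point) : bool := (y == x) || (y == partner x).

Lemma same_pair_equiv : {in [set: point] & &, equivalence_rel same_pair}.
Proof.
move=> x y z _ _ _; split; first by rewrite /same_pair eqxx.
by rewrite /same_pair => /orP[] /eqP->; rewrite ?partnerK // orbC.
Qed.

Definition pairing_col (x : point) : bool := if x is inr j then white j else false.

Definition pairing : tpart :=
  TPart pairing_col (equivalence_partitionP same_pair_equiv).

Lemma pairing_blkP B :
  B \in blk pairing -> exists x : 'I_N, B = [set inr x; partner (inr x)].
Proof.
case/imsetP => -[[]//|x] _ ->; exists x.
by apply/setP => y; rewrite !inE.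
Qed.

Lemma pairing_blk_mem (x : 'I_N) : [set inr x; partner (inr x)] \in blk pairing.
Proof.
apply/imsetP; exists (inr x); first by rewrite inE.
by apply/setP => y; rewrite !inE.
Qed.

Lemma mem_pair_lev (x y : 'I_N) :
  (inr y : point) \in [set inr x; partner (inr x)] -> lev y = lev x.
Proof. by rewrite !inE => /orP[] /eqP[->] //=; apply: mate_lev. Qed.

Lemma mem_pair_partner (x : point) u v :
  u \in [set x; partner x] -> v \in [set x; partner x] -> u != v -> v = partner u.
Proof. by rewrite !inE => /orP[] /eqP-> /orP[] /eqP->; rewrite ?eqxx ?partnerK. Qed.

Local Open Scope ring_scope.

Definition step (j : nat) : int := if white j then 1 else -1.

Lemma step_height j : (j < N)%N -> step j = (height j.+1)%:Z - (height j)%:Z.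
Proof. by move=> lt_jN; rewrite height_hi // height_lo // /step; case: (white j); lia. Qed.

Lemma sum_step m n : (m <= n <= N)%N ->
  \sum_(m <= j < n) step j = (height n)%:Z - (height m)%:Z.
Proof.
case/andP=> le_mn le_nN.
apply: (telescope_sumr_eq (fun j => (height j)%:Z)) => // j /andP[_ lt_jn].
by apply: step_height; apply: leq_trans le_nN.
Qed.

Lemma sigma_pairing (S : {set pt pairing}) (P : pred nat) :
  (forall j : 'I_N, (inr j \in S) = P j) ->
  sigma S = \sum_(0 <= j < N | P j) step j.
Proof.
move=> SP; rewrite sigma_sum big_sumType big_ord0 Monoid.mul1m big_mkord.
by apply: eq_big => j; rewrite ?SP.
Qed.

Lemma sum_step_cyc3 (a b : nat) : (a < N)%N -> (b < N)%N -> a != b ->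
  \sum_(0 <= j < N | cyc3 a j b) step j = (height b)%:Z - (height a.+1)%:Z.
Proof.
move=> lt_aN lt_bN; case: ltngtP => [lt_ab|lt_ba|->]; rewrite ?eqxx // => _.
- rewrite (big_cat_nat (n := a.+1)) // (big_cat_nat (m := a.+1) (n := b)) ?(ltnW lt_bN) //=.
  rewrite (sum_nat_pred0 (m := 0)) => [|j]; last (rewrite /cyc3; lia).
  rewrite (sum_nat_pred0 (m := b)) => [|j]; last (rewrite /cyc3; lia).
  rewrite sum_nat_predT => [|j]; last (rewrite /cyc3; lia).
  by rewrite sum_step ?add0r ?addr0 //; lia.
- rewrite (big_cat_nat (n := b)) ?(ltnW lt_bN) //.
  rewrite (big_cat_nat (m := b) (n := a.+1)) ?(leqW (ltnW lt_ba)) //=.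
  rewrite (sum_nat_pred0 (m := b)) => [|j]; last (rewrite /cyc3; lia).
  rewrite (sum_nat_predT (m := 0)) => [|j]; last (rewrite /cyc3; lia).
  rewrite (sum_nat_predT (m := a.+1)) => [|j]; last (rewrite /cyc3; lia).
  by rewrite add0r !sum_step ?height_wrap //; lia.
Qed.

Lemma sigma_oint (a b : 'I_N) : a != b ->
  sigma (oint (inr a : pt pairing) (inr b)) = (height b)%:Z - (height a.+1)%:Z.
Proof.
move=> neq_ab; rewrite (@sigma_pairing _ (fun j => cyc3 a j b)) => [|j]; last by rewrite inE.
exact: sum_step_cyc3.
Qed.

Lemma sigma_ocint (a b : 'I_N) : a != b ->
  sigma (ocint (inr a : pt pairing) (inr b)) = (height b.+1)%:Z - (height a.+1)%:Z.
Proof.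
move=> neq_ab; have neq_inr : (inr a : pt pairing) != inr b by apply: contra neq_ab => /eqP[->].
rewrite /ocint (negbTE neq_inr).
rewrite sigma_sum big_setU1 /= -?(@sigma_sum pairing); last by rewrite inE /cyc3; lia.
rewrite sigma_oint // -/(step b) step_height //; lia.
Qed.

Lemma delta_pairing (a b : 'I_N) :
  absz (delta (inr a : pt pairing) (inr b)) = `|lev b - lev a|%N.
Proof.
have [->|neq_ab] := eqVneq a b; first by rewrite /delta /ocint !eqxx /= sigma_sum big_set0 subrr.
rewrite /delta /= (fun_if (@absz)) sigma_oint // sigma_ocint //.
by rewrite !height_hi // height_lo //; case: (white a); case: (white b) => /=; lia.
Qed.

Lemma dp_pairing B B' (x y : 'I_N) : B \in blk pairing -> B' \in blk pairing ->
  inr x \in B -> inr y \in B' -> dp B B' = `|lev y - lev x|%N.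
Proof.
move=> /pairing_blkP[z ->] /pairing_blkP[z' ->] xz yz'.
rewrite /dp; case: pickP => [[[]//|u] uz|/(_ (inr z))]; last by rewrite !inE eqxx.
case: pickP => [[[]//|v] vz'|/(_ (inr z'))]; last by rewrite !inE eqxx.
rewrite delta_pairing (mem_pair_lev uz) (mem_pair_lev vz').
by rewrite (mem_pair_lev xz) (mem_pair_lev yz').
Qed.

Lemma sigma_oint_partner (x : pt pairing) : sigma (oint x (partner x)) = 0.
Proof.
case: x => [[]//|x]; have lt_xN := ltn_ord x.
rewrite sigma_oint; last by rewrite -val_eqE /= eq_sym mate_neq.
by rewrite height_lo ?mate_lt // height_hi // mate_white // mate_lev //; case: (white x); lia.
Qed.

Lemma S0_pairing : S0 pairing.
Proof.
split.
  apply/forallP => B; apply/implyP => /pairing_blkP[x ->].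
  rewrite cards2 (eq_sym (inr x)) partner_neq /=.
  apply/existsP; exists (inr x); rewrite !inE eqxx /=.
  apply/existsP; exists (partner (inr x)); rewrite !inE eqxx orbT /=.
  by rewrite mate_white //; case: (white x).
move=> B /pairing_blkP[x ->] a b a_in b_in neq_ab.
rewrite (mem_pair_partner a_in b_in neq_ab); exact: sigma_oint_partner.
Qed.

Definition interleaved (a c : nat) : bool := cyc3 a c (mate a) && cyc3 (mate a) (mate c) a.

Lemma crossing_pairing B B' : B \in blk pairing -> B' \in blk pairing -> crossing B B' ->
  exists a c : 'I_N, [/\ interleaved a c, inr a \in B & inr c \in B'].
Proof.
move=> /pairing_blkP[x ->] /pairing_blkP[y ->] [_ [a [b [c [d [a_in b_in c_in d_in]]]]]].
case/andP=> acb bda; have [neq_ac neq_cb neq_ab] := cyc3_neq acb.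
have neq_cd : c != d by apply: contraTneq bda => <-; rewrite /cyc3; move: acb; rewrite /cyc3; lia.
have neq_ab' : a != b by apply: contraNneq neq_ab => ->.
move: acb bda; rewrite (mem_pair_partner a_in b_in neq_ab') (mem_pair_partner c_in d_in neq_cd).
clear -a_in c_in; case: a a_in => [[]//|a] a_in; case: c c_in => [[]//|c] c_in /= acb bda.
by exists a, c; rewrite /interleaved acb bda.
Qed.

Lemma interleaved_crossing (a c : 'I_N) : interleaved a c ->
  @crossing pairing [set inr a; partner (inr a)] [set inr c; partner (inr c)].
Proof.
case/andP=> acb bda; have [neq_ac neq_cb _] := cyc3_neq acb.
have c_out : (inr c : point) \notin [set inr a; partner (inr a)].
  rewrite !inE; apply/norP; split; apply/eqP => -[/(congr1 val) /= E].
    by rewrite E eqxx in neq_ac.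
  by rewrite E eqxx in neq_cb.
split; first by apply: contraNneq c_out => ->; rewrite !inE eqxx.
exists (inr a), (partner (inr a)), (inr c), (partner (inr c)).
by rewrite !inE !eqxx !orbT /= acb bda.
Qed.

Lemma in_ID_pairing D :
  (forall a c : 'I_N, interleaved a c -> ~ D `|lev c - lev a|%N) -> in_ID D pairing.
Proof.
move=> noD; split; first exact: S0_pairing.
move=> B B' B_in B'_in /[dup] cross /(crossing_pairing B_in B'_in)[a [c [ac a_in c_in]]].
by rewrite (dp_pairing B_in B'_in a_in c_in); apply: noD.
Qed.

Lemma crosses_at_pairing (a c : 'I_N) :
  interleaved a c -> crosses_at pairing `|lev c - lev a|%N.
Proof.
move=> ac; exists [set inr a; partner (inr a)], [set inr c; partner (inr c)].
split; [exact: pairing_blk_mem | exact: pairing_blk_mem | exact: interleaved_crossing |].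
by apply: dp_pairing; rewrite ?pairing_blk_mem // !inE eqxx.
Qed.

Lemma pairing_witness D n :
  (exists a c : 'I_N, interleaved a c /\ `|lev c - lev a|%N = n) ->
  (forall a c : 'I_N, interleaved a c -> ~ D `|lev c - lev a|%N) ->
  exists p, in_ID D p /\ crosses_at p n.
Proof.
move=> [a [c [ac <-]]] noD; exists pairing; split; first exact: in_ID_pairing.
exact: crosses_at_pairing.
Qed.

End LowerRowPairing.

Ltac case_ifs :=
  repeat match goal with |- context [if ?b then _ else _] =>
    lazymatch b with
    | context [if _ then _ else _] => fail
    | _ => let E := fresh "E" in case E : b
    end
  end.

Section Mountains.

Variables (k : nat) (t : nat -> bool).

Definition mountain_lev x :=
  if x < k then x else if x < 2 * k then 2 * k - 1 - x
  else if x < 3 * k then x - 2 * k else 4 * k - 1 - x.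

Definition mountain_col x := (x < k) || (2 * k <= x < 3 * k).

Definition mountain_height x :=
  if x <= k then x else if x <= 2 * k then 2 * k - x
  else if x <= 3 * k then x - 2 * k else 4 * k - x.

(* Level [L] is paired across the mountains when [t L], inside each one
   otherwise. *)
Definition mountain_partner x :=
  if t (mountain_lev x) then 4 * k - 1 - x
  else if x < 2 * k then 2 * k - 1 - x else 6 * k - 1 - x.

Ltac unfold_mountain :=
  rewrite /mountain_lev /mountain_height /mountain_col /cyc3; case_ifs; lia.

Lemma mountain_height_lo x : x < 4 * k ->
  mountain_height x = mountain_lev x + ~~ mountain_col x.
Proof. by move=> ?; unfold_mountain. Qed.

Lemma mountain_height_hi x : x < 4 * k ->
  mountain_height x.+1 = mountain_lev x + mountain_col x.
Proof. by move=> ?; unfold_mountain. Qed.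

Lemma mountain_height_wrap : mountain_height (4 * k) = mountain_height 0.
Proof. by unfold_mountain. Qed.

Lemma mountain_lev_lt x : x < 4 * k -> mountain_lev x < k.
Proof. by move=> ?; unfold_mountain. Qed.

Lemma mountain_partner_lt x : x < 4 * k -> mountain_partner x < 4 * k.
Proof. by move=> ?; rewrite /mountain_partner; unfold_mountain. Qed.

Lemma mountain_partner_lev x : x < 4 * k -> mountain_lev (mountain_partner x) = mountain_lev x.
Proof. by move=> ?; rewrite /mountain_partner; unfold_mountain. Qed.

Lemma mountain_partner_col x : x < 4 * k ->
  mountain_col (mountain_partner x) = ~~ mountain_col x.
Proof. by move=> ?; rewrite /mountain_partner; unfold_mountain. Qed.

Lemma mountain_partnerK x : x < 4 * k -> mountain_partner (mountain_partner x) = x.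
Proof.
move=> lt_x; rewrite {1}/mountain_partner mountain_partner_lev //.
by rewrite /mountain_partner; unfold_mountain.
Qed.

Lemma mountain_interleaved a c : a < 4 * k -> c < 4 * k ->
  interleaved mountain_partner a c ->
  (t (mountain_lev c) && ~~ t (mountain_lev a) && (mountain_lev a < mountain_lev c)) ||
  (t (mountain_lev a) && ~~ t (mountain_lev c) && (mountain_lev c < mountain_lev a)).
Proof.
move=> lt_a lt_c.
have: t (mountain_lev a) != t (mountain_lev c) -> mountain_lev a != mountain_lev c.
  by apply: contra => /eqP ->.
rewrite /interleaved /mountain_partner.
by case: (t (mountain_lev a)); case: (t (mountain_lev c)) => /=; unfold_mountain.
Qed.

Lemma mountain_interleaved_base L : 0 < L < k -> t 0 = false -> t L = true ->
  interleaved mountain_partner 0 L.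
Proof.
move=> lt_L t0 tL.
have lev0 : mountain_lev 0 = 0 by unfold_mountain.
have levL : mountain_lev L = L by unfold_mountain.
by rewrite /interleaved /mountain_partner lev0 levL t0 tL; unfold_mountain.
Qed.

End Mountains.

Lemma subsemigroup_gap D n L L' : subsemigroup D -> L' < L <= n ->
  L = n \/ D (n - L) -> D (L - L') -> L' = n \/ D (n - L').
Proof.
move=> addD lt_L [->|DnL] DL; right => //.
by rewrite (_ : n - L' = n - L + (L - L')); [exact: addD | lia].
Qed.

Definition six_partner x := if x < 3 then x + 3 else x - 3.

Lemma six_point_witness D : ~ D 0 -> exists p, in_ID D p /\ crosses_at p 0.
Proof.
move=> notD0.
apply: (@pairing_witness 6 (fun x => ~~ odd x) (fun=> 0) odd six_partner) => //.
- by move=> x _; rewrite negbK.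
- by case=> [|[|[|[|[|[|]]]]]].
- by case=> [|[|[|[|[|[|]]]]]].
- by case=> [|[|[|[|[|[|]]]]]].
- by exists (Ordinal (isT : 0 < 6)), (Ordinal (isT : 1 < 6)).
Qed.

Lemma mountain_witness D n : subsemigroup D -> ~ D n.+1 ->
  exists p, in_ID D p /\ crosses_at p n.+1.
Proof.
move=> addD notDn; set k := n.+2.
have [t tP] : exists t : nat -> bool, forall L, t L <-> L = n.+1 \/ D (n.+1 - L).
  exists (fun L => if excluded_middle_informative (L = n.+1 \/ D (n.+1 - L))
                   then true else false).
  by move=> L; case: excluded_middle_informative.
apply: (pairing_witness (@mountain_height_wrap k) (@mountain_height_lo k) (@mountain_height_hi k)
  (@mountain_partner_lt k t) (@mountain_partnerK k t) (@mountain_partner_col k t)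
  (@mountain_partner_lev k t)).
- have t0 : t 0 = false by apply/negP => /tP[|] //; rewrite subn0.
  have tn : t n.+1 by apply/tP; left.
  have lt_n : n.+1 < 4 * k by rewrite /k; lia.
  exists (Ordinal (isT : 0 < 4 * k)), (Ordinal lt_n); split.
    by apply: mountain_interleaved_base => //=; lia.
  by rewrite /mountain_lev /=; case_ifs; lia.
- move=> a c /(mountain_interleaved (ltn_ord a) (ltn_ord c)).
  have := mountain_lev_lt (ltn_ord a); have := mountain_lev_lt (ltn_ord c).
  set La := mountain_lev k a; set Lc := mountain_lev k c => lt_Lc lt_La.
  case/orP=> /andP[/andP[/tP tL /negP ntL'] lt_L'L] DL.
  + rewrite distnEl in DL; last exact: ltnW.
    by apply: ntL'; apply/tP; apply: (subsemigroup_gap addD _ tL DL); lia.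
  + rewrite distnEr in DL; last exact: ltnW.
    by apply: ntL'; apply/tP; apply: (subsemigroup_gap addD _ tL DL); lia.
Qed.

Lemma crossing_witness D n : subsemigroup D -> ~ D n -> exists p, in_ID D p /\ crosses_at p n.
Proof. by case: n => [|n] addD; [exact: six_point_witness | exact: mountain_witness]. Qed.

Lemma in_ID_sub_mem D1 D2 : subsemigroup D2 ->
  (forall p, in_ID D2 p -> in_ID D1 p) -> forall n, D1 n -> D2 n.
Proof.
move=> addD2 sub21 n D1n; case: (excluded_middle_informative (D2 n)) => // notD2n.
have [p [p_in cross]] := crossing_witness addD2 notD2n.
by case: (in_ID_crosses_at (sub21 p p_in) cross).
Qed.

Theorem theorem1 (D1 D2 : nat -> Prop) :
  subsemigroup D1 -> subsemigroup D2 ->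
  (forall p : tpart, in_ID D1 p <-> in_ID D2 p) ->
  forall n, D1 n <-> D2 n.
Proof.
move=> addD1 addD2 eqID n; split; apply: in_ID_sub_mem => // p /eqID //.
Qed.
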